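(* Let $X\subseteq V_\Delta$ be finite such that $G_X$ is connected and $X$ has no holes. Let $P$ be a portal (for some axis) and let $u,v\in X\setminus P$. A shortest path from $u$ to $v$ in $G_X$ traverses (contains a node of) $P$ if and only if $u$ and $v$ are not in the same connected component of the subgraph of $G_X$ induced by $X\setminus P$.
   Context: $G_\Delta=(V_\Delta,E_\Delta)$ is the infinite regular triangular grid graph; its edges are parallel to one of three axes $x,y,z$. For finite $X\subseteq V_\Delta$, $G_X$ is the subgraph of $G_\Delta$ induced by $X$; $X$ has no holes if the subgraph of $G_\Delta$ induced by $V_\Delta\setminus X$ is connected. For an axis $d$, let $E_d$ be the set of edges of $G_X$ parallel to $d$; the $d$-portals are the vertex sets of the connected components of $(X,E_d)$. A portal is a $d$-portal for some axis $d$. *)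

(* Triangular grid G_Delta in axial coordinates on Z x Z. *)
From mathcomp Require Import all_boot all_order all_algebra.
From mathcomp Require Import finmap.
Set Implicit Arguments. Unset Strict Implicit. Unset Printing Implicit Defensive.
Import GRing.Theory Num.Theory.
Local Open Scope ring_scope.


Definition vertex := (int * int)%type.

Inductive axis := AxX | AxY | AxZ.

Definition dir (d : axis) : vertex :=
  match d with AxX => (1, 0) | AxY => (0, 1) | AxZ => (1, -1) end.

Definition adj_axis (d : axis) (a b : vertex) : Prop :=
  (b.1 = a.1 + (dir d).1 /\ b.2 = a.2 + (dir d).2) \/
  (a.1 = b.1 + (dir d).1 /\ a.2 = b.2 + (dir d).2).

Definition adj (a b : vertex) : Prop := exists d, adj_axis d a b.

Fixpoint walk (S : vertex -> Prop) (E : vertex -> vertex -> Prop)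
    (x : vertex) (s : seq vertex) : Prop :=
  match s with
  | [::] => True
  | y :: s' => E x y /\ S y /\ walk S E y s'
  end.

(* the vertex sequence u :: s is a path (walk) from u to v in the graph
   with vertex set S and edge relation E (induced by S); its length is size s *)
Definition path_in (S : vertex -> Prop) (E : vertex -> vertex -> Prop)
    (u : vertex) (s : seq vertex) (v : vertex) : Prop :=
  S u /\ walk S E u s /\ last u s = v.

Definition connected_in (S : vertex -> Prop) (E : vertex -> vertex -> Prop)
    (u v : vertex) : Prop :=
  exists s, path_in S E u s v.

Definition inX (X : {fset vertex}) : vertex -> Prop := fun x => x \in X.

Definition GX_connected (X : {fset vertex}) : Prop :=
  forall u v, u \in X -> v \in X -> connected_in (inX X) adj u v.

Definition no_holes (X : {fset vertex}) : Prop :=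
  forall a b, a \notin X -> b \notin X ->
    connected_in (fun x => x \notin X) adj a b.

Definition is_d_portal (X : {fset vertex}) (d : axis) (P : {fset vertex}) : Prop :=
  exists x, x \in X /\
    forall y, y \in P <-> connected_in (inX X) (adj_axis d) x y.

Definition is_portal (X : {fset vertex}) (P : {fset vertex}) : Prop :=
  exists d, is_d_portal X d P.

Definition shortest_path (X : {fset vertex}) (u : vertex) (s : seq vertex)
    (v : vertex) : Prop :=
  path_in (inX X) adj u s v /\
  forall t, path_in (inX X) adj u t v -> (size s <= size t)%N.

From mathcomp Require Import all_boot all_order all_algebra.
From mathcomp Require Import finmap zify.
Set Implicit Arguments. Unset Strict Implicit. Unset Printing Implicit Defensive.
Import GRing.Theory Num.Theory.

(* Suppose a shortest path meets the portal P, a segment of a d-line: it enters P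
   at p coming from x and leaves it for the last time at q towards y.  If x and y
   were joined in X \ P, the walk x ~> y, q, ..., p, x (back along P) would be a
   closed walk C in X.  Every vertex outside X is joined to infinity outside X,
   since X has no holes, so C winds zero times around it.  Evaluated at the two
   ends of P, which lie outside X, this forces y onto the same side of P as x;
   evaluated at the vertices strictly between x and y on their common line, it
   forces them into X.  That straight walk from x to y is at most one step
   longer than the distance from p to q along P, hence shorter than the subpath
   x, p, ..., q, y. *)

Local Open Scope ring_scope.

Section Walks.
Variables (S : vertex -> Prop) (E : vertex -> vertex -> Prop).

Lemma walk_cat a s1 s2 :
  walk S E a (s1 ++ s2) <-> walk S E a s1 /\ walk S E (last a s1) s2.
Proof.
elim: s1 a => [|b s1 IH] a /=; first by split=> // - [].
by rewrite IH; tauto.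
Qed.

Lemma walk_mem a s : walk S E a s -> forall z, z \in s -> S z.
Proof.
elim: s a => [|b s IH] a //= [_ [Sb Ws]] z; rewrite in_cons => /predU1P[-> //|].
exact: IH Ws z.
Qed.

Lemma walk_subset (S' : vertex -> Prop) a s :
  (forall z, z \in s -> S' z) -> walk S E a s -> walk S' E a s.
Proof.
elim: s a => [|b s IH] a //= S's [Eab [_ Ws]]; split=> //; split.
  by apply: S's; rewrite mem_head.
by apply: IH Ws => z zs; apply: S's; rewrite inE zs orbT.
Qed.

Lemma walk_subrel (E' : vertex -> vertex -> Prop) a s :
  (forall x y, E x y -> E' x y) -> walk S E a s -> walk S E' a s.
Proof.
move=> EE'; elim: s a => [|b s IH] a //= [Eab [Sb Ws]]; split; first exact: EE'.
by split; last exact: IH.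
Qed.

Lemma connected_trans a b c :
  connected_in S E a b -> connected_in S E b c -> connected_in S E a c.
Proof.
case=> s [Sa [Ws <-]] [t [_ [Wt <-]]].
by exists (s ++ t); split=> //; rewrite walk_cat last_cat.
Qed.

Lemma connected_memr a b : connected_in S E a b -> S b.
Proof.
case=> s [Sa [Ws <-]]; elim: s a Sa Ws => [|c s IH] a Sa //= [_ [Sc]].
exact: IH.
Qed.

Hypothesis E_sym : forall a b, E a b -> E b a.

Lemma connected_sym a b : connected_in S E a b -> connected_in S E b a.
Proof.
case=> s [Sa [Ws <-]] {b}; elim: s a Sa Ws => [|c s IH] a Sa /=.
  by exists [::].
case=> Eac [Sc /(IH c Sc) [t [Sb [Wt Lt]]]].
exists (rcons t a); split=> //; rewrite last_rcons -cats1 walk_cat Lt /=.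
by do !split=> //; exact: E_sym.
Qed.

End Walks.

Lemma forall_in_cons (T : eqType) (Q : T -> Prop) a s :
  {in a :: s, forall z, Q z} -> Q a /\ {in s, forall z, Q z}.
Proof. by move=> Q_as; split=> [|z zs]; apply: Q_as; rewrite in_cons ?eqxx ?zs ?orbT. Qed.

Lemma adj_sym a b : adj a b -> adj b a.
Proof. by case=> d H; exists d; rewrite /adj_axis in H *; tauto. Qed.

Lemma adj_axis_adj d a b : adj_axis d a b -> adj a b.
Proof. by exists d. Qed.

Lemma adj_axes a b :
  adj a b <-> adj_axis AxX a b \/ adj_axis AxY a b \/ adj_axis AxZ a b.
Proof.
split; first by case=> [[]] H; tauto.
by case=> [H|[H|H]]; eexists; exact: H.
Qed.

Lemma shortest_path_infix X u s1 s2 s3 v t :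
  shortest_path X u (s1 ++ s2 ++ s3) v ->
  walk (inX X) adj (last u s1) t -> last (last u s1) t = last (last u s1) s2 ->
  (size s2 <= size t)%N.
Proof.
case=> [[uX [W <-]] minimal] Wt Lt.
move: (W); rewrite !walk_cat => -[W1 [_ W3]].
have /minimal : path_in (inX X) adj u (s1 ++ t ++ s3) (last u (s1 ++ s2 ++ s3)).
  by rewrite /path_in !walk_cat !last_cat Lt.
by rewrite !size_cat leq_add2l leq_add2r.
Qed.

Lemma split_last_exit (T : Type) (a : pred T) x s :
  has a (x :: s) -> ~~ a (last x s) ->
  exists s1 y s2, [/\ s = s1 ++ y :: s2, a (last x s1) & ~~ has a (y :: s2)].
Proof.
elim: s x => [|b s IH] x /=; first by rewrite orbF => ->.
case hbs: (a b || has a s).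
  by move=> _ /(IH b hbs) [s1 [y [s2 [-> ? ?]]]]; exists (b :: s1), y, s2.
by rewrite orbF => ax _; exists [::], b, s; rewrite /= hbs.
Qed.

Lemma split_entry_exit (T : Type) (a : pred T) u s :
  ~~ a u -> ~~ a (last u s) -> has a (u :: s) ->
  exists s1 p m y n, [/\ s = s1 ++ p :: m ++ y :: n, a p, a (last p m),
    ~~ has a (u :: s1) & ~~ has a (y :: n)].
Proof.
move=> au /[swap]; rewrite /= (negbTE au) /=.
case/split_find=> p s1 r ap s1a; rewrite cat_rcons last_cat /= => ar.
have [||m [y [n [-> am yn]]]] := @split_last_exit _ a p r; [by rewrite /= ap | by [] |].
by exists s1, p, m, y, n; split=> //=; rewrite (negbTE au).
Qed.

Lemma ubound_seq (T : eqType) (f : T -> int) (r : seq T) :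
  exists B, forall x, x \in r -> f x < B.
Proof.
elim: r => [|b r [B ltB]]; first by exists 0.
by exists (Order.max B (f b + 1)) => x; rewrite in_cons => /predU1P[->|/ltB]; lia.
Qed.

Lemma int_run_end (Q : pred int) t0 B : Q t0 -> (forall k, B <= k -> ~~ Q k) ->
  exists hi, [/\ t0 <= hi, forall k, t0 <= k <= hi -> Q k & ~~ Q (hi + 1)].
Proof.
move=> Qt0 QB; have [n /QB] : exists n : nat, B <= t0 + n%:Z.
  by exists (absz (B - t0)); lia.
elim: n t0 Qt0 => [|n IH] t0 Qt0; first by rewrite addr0 Qt0.
have [Qt1 QnS|Nt1 _] := boolP (Q (t0 + 1)).
  have [|hi [? Qhi ?]] := IH _ Qt1.
    by rewrite (_ : _ + _ + _ = t0 + n.+1%:Z) //; lia.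
  exists hi; split=> [|k hk|//]; first lia.
  have [-> //|?] := eqVneq k t0.
  by apply: Qhi; lia.
by exists t0; split=> // k hk; have -> : k = t0 by lia.
Qed.

Definition step (ta la tb lb : int) : Prop :=
  (tb = ta + 1 /\ lb = la) \/ (ta = tb + 1 /\ lb = la) \/
  (tb = ta /\ lb = la + 1) \/ (tb = ta /\ la = lb + 1) \/
  (tb = ta + 1 /\ la = lb + 1) \/ (ta = tb + 1 /\ lb = la + 1).

(* Coordinates in which the [d]-lines are the rows [lvl = l], run along by [pos]. *)
Record frame (d : axis) := Frame {
  pos : vertex -> int;
  lvl : vertex -> int;
  pt : int -> int -> vertex;
  pos_pt : forall t l, pos (pt t l) = t;
  lvl_pt : forall t l, lvl (pt t l) = l;
  pt_pos_lvl : forall v, pt (pos v) (lvl v) = v;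
  adj_step : forall a b, adj a b <-> step (pos a) (lvl a) (pos b) (lvl b);
  adj_axis_step : forall a b, adj_axis d a b <->
    lvl b = lvl a /\ (pos b = pos a + 1 \/ pos a = pos b + 1)
}.

Ltac frame_adj := move=> [a1 a2] [b1 b2]; rewrite ?adj_axes /adj_axis /step /=; split; lia.

Definition frame_x : frame AxX.
Proof.
by refine (@Frame AxX (fun v => v.1) (fun v => v.2) pair _ _ _ _ _) => //;
  [case | frame_adj | frame_adj].
Defined.

Definition frame_y : frame AxY.
Proof.
by refine (@Frame AxY (fun v => v.2) (fun v => v.1) (fun t l => (l, t)) _ _ _ _ _)
  => //; [case | frame_adj | frame_adj].
Defined.

Definition frame_z : frame AxZ.
Proof.
refine (@Frame AxZ (fun v => - v.2) (fun v => v.1 + v.2) (fun t l => (l + t, - t))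
  _ _ _ _ _) => /=; [lia | lia | | frame_adj | frame_adj].
by case=> a b /=; congr pair; lia.
Defined.

Definition frame_of (d : axis) : frame d :=
  match d with AxX => frame_x | AxY => frame_y | AxZ => frame_z end.

Definition frame_opp d (K : frame d) : frame d.
Proof.
refine (@Frame d (fun v => - pos K v) (fun v => - lvl K v)
  (fun t l => pt K (- t) (- l)) _ _ _ _ _) => /=.
- by move=> t l; rewrite pos_pt opprK.
- by move=> t l; rewrite lvl_pt opprK.
- by move=> v; rewrite !opprK pt_pos_lvl.
- by move=> a b; rewrite (adj_step K) /step; split; lia.
- by move=> a b; rewrite (adj_axis_step K); split; lia.
Defined.

(* [lia] gets very slow in the presence of [fset] membership hypotheses. *)
Ltac flia := repeat match goal with
  | H : is_true (_ \in _) |- _ => clear H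
  | H : is_true (_ \notin _) |- _ => clear H
  end; lia.

Section Frame.
Variables (d : axis) (K : frame d).
Local Notation pos := (pos K).
Local Notation lvl := (lvl K).
Local Notation pt := (pt K).

Lemma pt_eq t l v : pos v = t -> lvl v = l -> pt t l = v.
Proof. by move=> <- <-; rewrite pt_pos_lvl. Qed.

Lemma pos_lvl_inj a b : pos a = pos b -> lvl a = lvl b -> a = b.
Proof. by move=> ab ab'; rewrite -(pt_eq ab ab') pt_pos_lvl. Qed.

Lemma notin_pos_neq (r : seq vertex) v z :
  v \notin r -> z \in r -> lvl z = lvl v -> pos z <> pos v.
Proof. by move=> vr zr zl zp; move: vr; rewrite -(pos_lvl_inj zp zl) zr. Qed.

(* [winding l t a s] counts with sign the crossings of the walk [a :: s] with
   the half-line of height [l + 1/2] to the right of [t]; for a closed walk it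
   is the winding number around an interior point of the triangle
   [pt t l], [pt (t + 1) l], [pt t (l + 1)]. *)
Definition crossing (l t : int) (a b : vertex) : int :=
  (if (lvl a == l) && (lvl b == l + 1) && (t < pos a) then 1 else 0) -
  (if (lvl b == l) && (lvl a == l + 1) && (t < pos b) then 1 else 0).

Fixpoint winding (l t : int) (a : vertex) (s : seq vertex) : int :=
  if s is b :: s' then crossing l t a b + winding l t b s' else 0.

Definition above (l t : int) (v : vertex) : int :=
  if (lvl v == l + 1) && (t < pos v) then 1 else 0.

Lemma crossing_pos_eq l t1 t2 a b : t1 <= t2 ->
  (lvl a = l -> pos a <= t1 \/ t2 < pos a) ->
  (lvl b = l -> pos b <= t1 \/ t2 < pos b) ->
  crossing l t1 a b = crossing l t2 a b.
Proof. by rewrite /crossing => t12 Na Nb; repeat case: ifP; lia. Qed.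

Lemma crossing_sub_lvlS l t a b : adj a b ->
  (lvl a = l + 1 -> pos a <> t) -> (lvl b = l + 1 -> pos b <> t) ->
  crossing l t a b - crossing (l + 1) t a b = above l t b - above l t a.
Proof.
by rewrite (adj_step K) /step /crossing /above => ab Na Nb; repeat case: ifP; lia.
Qed.

Lemma crossing_up l t a b : lvl a = l -> lvl b = l + 1 ->
  crossing l t a b = if t < pos a then 1 else 0.
Proof. by rewrite /crossing => al bl; repeat case: ifP; lia. Qed.

Lemma crossing_down l t a b : lvl a = l + 1 -> lvl b = l ->
  crossing l t a b = - (if t < pos b then 1 else 0).
Proof. by rewrite /crossing => al bl; repeat case: ifP; lia. Qed.

Lemma winding_cat l t a s1 s2 :
  winding l t a (s1 ++ s2) = winding l t a s1 + winding l t (last a s1) s2.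
Proof. by elim: s1 a => [|b s1 IH] a /=; rewrite ?add0r ?IH ?addrA. Qed.

Lemma winding_pos_eq l t1 t2 a s : t1 <= t2 ->
  {in a :: s, forall z, lvl z = l -> pos z <= t1 \/ t2 < pos z} ->
  winding l t1 a s = winding l t2 a s.
Proof.
move=> t12; elim: s a => [|b s IH] a //=.
case/forall_in_cons=> Ha /[dup] /forall_in_cons[Hb _] /IH <-.
by rewrite (crossing_pos_eq t12 Ha Hb).
Qed.

Lemma winding_sub_lvlS S l t a s : walk S adj a s ->
  {in a :: s, forall z, lvl z = l + 1 -> pos z <> t} ->
  winding l t a s - winding (l + 1) t a s = above l t (last a s) - above l t a.
Proof.
elim: s a => [|b s IH] a /=; first by rewrite !subrr.
case=> ab [_ /IH IHb] /forall_in_cons[Ha /[dup] /forall_in_cons[Hb _] /IHb].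
by have := crossing_sub_lvlS ab Ha Hb; lia.
Qed.

Lemma winding_lvlS S l t a s : walk S adj a s -> last a s = a ->
  {in a :: s, forall z, lvl z = l + 1 -> pos z <> t} ->
  winding l t a s = winding (l + 1) t a s.
Proof. by move=> Ws La /(winding_sub_lvlS Ws); rewrite La; lia. Qed.

Lemma winding_adj S a s v w : walk S adj a s -> last a s = a ->
  v \notin a :: s -> w \notin a :: s -> adj v w ->
  winding (lvl v) (pos v) a s = winding (lvl w) (pos w) a s.
Proof.
move=> Ws La vN wN /(adj_step K) vw.
wlog {vw}: v w vN wN / (pos w = pos v + 1 /\ lvl w = lvl v) \/
  (pos w = pos v /\ lvl w = lvl v + 1) \/ (pos w = pos v + 1 /\ lvl v = lvl w + 1).
  move=> gen; rewrite /step in vw.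
  by case: vw => [|[|[|[|[|]]]]] vw;
    first [apply: gen => //; lia | symmetry; apply: gen => //; lia].
have avoid u : u \notin a :: s -> {in a :: s, forall z, lvl z = lvl u -> pos z <> pos u}.
  by move=> uN z zs; apply: notin_pos_neq uN zs.
case=> [[wt wl]|[[wt wl]|[wt vl]]].
- rewrite wl wt; apply: winding_pos_eq => [|z zs zl]; first lia.
  by have := avoid w wN z zs; lia.
- rewrite wl wt; apply: (winding_lvlS Ws La) => z zs zl.
  by have := avoid w wN z zs; lia.
- rewrite vl -(winding_lvlS Ws La) => [|z zs zl]; last by have := avoid v vN z zs; lia.
  rewrite wt; apply: winding_pos_eq => [|z zs zl]; first lia.
  by have := avoid w wN z zs; lia.
Qed.

Lemma winding_connected S (Q : vertex -> Prop) a s v w :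
  walk S adj a s -> last a s = a -> (forall z, Q z -> z \notin a :: s) ->
  connected_in Q adj v w ->
  winding (lvl v) (pos v) a s = winding (lvl w) (pos w) a s.
Proof.
move=> Ws La Qout [r [Qv [Wr <-]]].
elim: r v Qv Wr => [|b r IH] v Qv //= [vb [Qb Wr]].
by rewrite (winding_adj Ws La _ _ vb) ?Qout // IH.
Qed.

Lemma winding_eq0 l t a s : all (fun z => lvl z != l + 1) (a :: s) ->
  winding l t a s = 0.
Proof.
elim: s a => [|b s IH] a //= /andP[Na /[dup] /andP[Nb _] Nbs].
by rewrite IH // /crossing; repeat case: ifP; lia.
Qed.

Lemma winding_outside_eq0 (X : {fset vertex}) S a s z : no_holes X ->
  walk S adj a s -> last a s = a -> (forall w, w \in a :: s -> w \in X) ->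
  z \notin X -> winding (lvl z) (pos z) a s = 0.
Proof.
move=> noholes Ws La sX zX.
have [B ltB] := ubound_seq lvl X.
have fX : pt 0 B \notin X by apply/negP => /ltB; rewrite lvl_pt; lia.
rewrite (winding_connected Ws La _ (noholes _ _ zX fX)) => [|w]; last first.
  by apply: contra; exact: sX.
by rewrite lvl_pt; apply: winding_eq0; apply/allP => w /sX /ltB; lia.
Qed.

Lemma pos_neq_outside (X : {fset vertex}) t l z :
  pt t l \notin X -> z \in X -> lvl z = l -> pos z <> t.
Proof. by move=> tX zX zl zt; move: tX; rewrite (pt_eq zt zl) zX. Qed.

Lemma walk_pos_dist S a s : walk S adj a s -> (absz (pos (last a s) - pos a)%R <= size s)%N.
Proof.
elim: s a => [|b s IH] a /=; first by lia.
by case=> /(adj_step K) ab [_ /IH]; rewrite /step in ab; lia.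
Qed.

Lemma axis_walk (S : vertex -> Prop) x y : lvl y = lvl x ->
  (forall z, lvl z = lvl x ->
     Num.min (pos x) (pos y) <= pos z <= Num.max (pos x) (pos y) -> S z) ->
  exists t, [/\ walk S (adj_axis d) x t, last x t = y,
    size t = absz (pos y - pos x) & forall z, z \in t -> lvl z = lvl x].
Proof.
move=> yx; move Dn: (absz (pos y - pos x)) => n.
elim: n x yx Dn => [|n IH] x yx xyn Sxy.
  by exists [::]; split=> //=; apply: pos_lvl_inj; lia.
pose x' := pt (pos x + (if pos x < pos y then 1 else -1)) (lvl x).
have x'x : lvl x' = lvl x by rewrite lvl_pt.
have x'pos : pos x' = pos x + 1 /\ pos x < pos y \/ pos x' = pos x - 1 /\ pos y <= pos x.
  by rewrite pos_pt; case: ltrP; lia.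
have [|||t [Wt Lt St tl]] := IH x'; rewrite ?x'x //; first lia.
  by move=> z zx zb; apply: Sxy => //; lia.
exists (x' :: t); split=> //=.
- split; first by apply/(adj_axis_step K); lia.
  by split=> //; apply: Sxy => //; lia.
- by rewrite St; lia.
- by move=> z; rewrite in_cons => /predU1P[->|/tl]; rewrite ?x'x.
Qed.

Lemma portal_segment (X P : {fset vertex}) x0 : x0 \in X ->
  (forall y, y \in P <-> connected_in (inX X) (adj_axis d) x0 y) ->
  exists lo hi, [/\ forall y, y \in P <-> lvl y = lvl x0 /\ lo <= pos y <= hi,
    forall y, lvl y = lvl x0 -> lo <= pos y <= hi -> y \in X,
    pt (lo - 1) (lvl x0) \notin X & pt (hi + 1) (lvl x0) \notin X].
Proof.
move=> x0X P_comp; set c := lvl x0.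
have [B ltB] := ubound_seq (fun v => `|pos v|) X.
have farX k : B <= `|k| -> pt k c \notin X.
  by move=> Bk; apply/negP => /ltB; rewrite pos_pt; flia.
have x0c : pt (pos x0) c \in X by rewrite pt_pos_lvl.
have [hi [x0hi runR hiX]] := @int_run_end (fun k => pt k c \in X) (pos x0) B x0c
  (fun k Bk => farX k (Order.le_trans Bk (ler_norm k))).
have [lo' [x0lo runL loX]] : exists lo', [/\ - pos x0 <= lo',
    forall k, - pos x0 <= k <= lo' -> pt (- k) c \in X & pt (- (lo' + 1)) c \notin X].
  apply: (@int_run_end (fun k => pt (- k) c \in X) _ B); first by rewrite opprK.
  by move=> k Bk; apply: farX; flia.
have segX y : lvl y = c -> - lo' <= pos y <= hi -> y \in X.
  move=> yc yseg; rewrite -(pt_pos_lvl K y) yc.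
  case: (lerP (pos x0) (pos y)) => [x0y|yx0]; first by apply: runR; flia.
  by rewrite -[pos y]opprK; apply: runL; flia.
have loX' : pt (- lo' - 1) c \notin X by rewrite -opprD.
exists (- lo'), hi; split=> // y; rewrite P_comp; split; last first.
  case=> yc yseg; have [|t [Wt Lt _ _]] := @axis_walk (inX X) x0 y yc.
    by move=> z zc zseg; apply: segX; flia.
  by exists t.
case=> t [_ [Wt <-]].
have : lvl x0 = c /\ - lo' <= pos x0 <= hi by split=> //; flia.
clearbody c; elim: t x0 Wt {x0X x0c P_comp segX runR runL x0lo x0hi} => //= b t IH a.
case=> /(adj_axis_step K) ab [bX /IH IHb] ha; apply: IHb.
by have := pos_neq_outside hiX bX; have := pos_neq_outside loX' bX; flia.
Qed.

Section PortalCycle.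
Variables (X P : {fset vertex}) (c lo hi : int) (x p q y : vertex) (w lq : seq vertex).
Hypotheses (noholesX : no_holes X)
  (P_seg : forall z, z \in P <-> lvl z = c /\ lo <= pos z <= hi)
  (lo_out : pt (lo - 1) c \notin X) (hi_out : pt (hi + 1) c \notin X)
  (pP : p \in P) (qP : q \in P) (qX : q \in X) (xp : adj x p) (yq : adj y q)
  (xX : x \in X) (yX : y \in X) (yP : y \notin P) (x_up : lvl x = c + 1)
  (w_walk : walk (fun z => z \in X /\ z \notin P) adj x w) (w_last : last x w = y)
  (lq_walk : walk (inX X) (adj_axis d) q lq) (lq_last : last q lq = p)
  (lq_lvl : forall z, z \in lq -> lvl z = c).

Let cyc := w ++ q :: rcons lq x.

Lemma cyc_walk : walk (inX X) adj x cyc.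
Proof.
rewrite /cyc walk_cat w_last -cats1 /= walk_cat lq_last /=.
split; first by apply: walk_subset w_walk => z /(walk_mem w_walk) [].
do !split=> //; last exact: adj_sym.
exact: walk_subrel (@adj_axis_adj d) lq_walk.
Qed.

Lemma cyc_last : last x cyc = x.
Proof. by rewrite /cyc last_cat /= last_rcons. Qed.

Lemma cyc_in_X z : z \in x :: cyc -> z \in X.
Proof. by rewrite in_cons => /predU1P[-> //|]; exact: walk_mem cyc_walk z. Qed.

Lemma winding_cyc_outside z : z \notin X -> winding (lvl z) (pos z) x cyc = 0.
Proof. exact: winding_outside_eq0 noholesX cyc_walk cyc_last cyc_in_X. Qed.

Lemma outside_portal z : z \in X -> z \notin P -> lvl z = c ->
  pos z < lo - 1 \/ hi + 1 < pos z.
Proof.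
move=> zX /negP zP zc; have := pos_neq_outside lo_out zX zc.
by have := pos_neq_outside hi_out zX zc; rewrite P_seg in zP; flia.
Qed.

Lemma winding_cyc_split t :
  winding c t x cyc = winding c t x w + crossing c t y q + crossing c t p x.
Proof.
rewrite /cyc winding_cat w_last /= -cats1 winding_cat lq_last /= (@winding_eq0 c t q lq).
  by rewrite addr0; flia.
have [qc _] := (P_seg q).1 qP.
by apply/allP => z; rewrite in_cons => /predU1P[->|/lq_lvl ->]; flia.
Qed.

Lemma winding_cyc_portal t : lo - 1 <= t <= hi + 1 ->
  winding c t x cyc = crossing c t y q + crossing c t p x.
Proof.
move=> t_range; have [pc pr] := (P_seg p).1 pP; have [qc qr] := (P_seg q).1 qP.
have w_eq : winding c t x w = winding c (hi + 1) x w.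
  apply: winding_pos_eq => [|z]; first flia.
  rewrite in_cons => /predU1P[-> | /(walk_mem w_walk) [zX zP]] zc; first flia.
  by have := outside_portal zX zP zc; flia.
have end0 : crossing c (hi + 1) y q + crossing c (hi + 1) p x = 0.
  by rewrite /crossing; repeat case: ifP; flia.
have := winding_cyc_outside hi_out; rewrite lvl_pt pos_pt !winding_cyc_split w_eq.
flia.
Qed.

Lemma lvl_y : lvl y = c + 1.
Proof.
have [pc pr] := (P_seg p).1 pP; have [qc qr] := (P_seg q).1 qP.
have := winding_cyc_outside lo_out; rewrite lvl_pt pos_pt winding_cyc_portal; last flia.
rewrite (crossing_up _ pc x_up) /crossing.
have := (adj_step K y q).1 yq; have := outside_portal yX yP; rewrite /step.
by repeat case: ifP; flia.
Qed.

Lemma between_in_X z : lvl z = c + 1 ->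
  Num.min (pos x) (pos y) <= pos z <= Num.max (pos x) (pos y) -> z \in X.
Proof.
move=> zc z_range; apply/negPn/negP => zX.
have [pc pr] := (P_seg p).1 pP; have [qc qr] := (P_seg q).1 qP.
have xz := notin_pos_neq zX xX (etrans x_up (esym zc)).
have yc := lvl_y; have yz := notin_pos_neq zX yX (etrans yc (esym zc)).
have := (adj_step K x p).1 xp; have := (adj_step K y q).1 yq; rewrite /step => yq' xp'.
have := winding_cyc_outside zX.
rewrite zc -(winding_lvlS cyc_walk cyc_last) => [|u /cyc_in_X uX ul]; last first.
  exact: notin_pos_neq zX uX (etrans ul (esym zc)).
rewrite winding_cyc_portal; last flia.
by rewrite (crossing_up _ pc x_up) (crossing_down _ yc qc); repeat case: ifP; flia.
Qed.

Lemma portal_shortcut : exists t, [/\ walk (inX X) adj x t, last x t = y &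
  (size t <= (absz (pos p - pos q)%R).+1)%N].
Proof.
have yc := lvl_y; have [pc _] := (P_seg p).1 pP; have [qc _] := (P_seg q).1 qP.
have [||t [Wt Lt St _]] := @axis_walk (inX X) x y; first flia.
  by move=> z zc zr; apply: between_in_X => //; flia.
exists t; split=> //; first exact: walk_subrel (@adj_axis_adj d) Wt.
by have := (adj_step K x p).1 xp; have := (adj_step K y q).1 yq; rewrite /step; flia.
Qed.

End PortalCycle.

Lemma portal_detour_up (X P : {fset vertex}) x0 x p q y w :
  no_holes X -> x0 \in X ->
  (forall z, z \in P <-> connected_in (inX X) (adj_axis d) x0 z) ->
  p \in P -> q \in P -> adj x p -> adj y q -> x \in X -> y \in X -> y \notin P ->
  walk (fun z => z \in X /\ z \notin P) adj x w -> last x w = y ->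
  lvl x = lvl p + 1 ->
  exists t, [/\ walk (inX X) adj x t, last x t = y &
    (size t <= (absz (pos p - pos q)%R).+1)%N].
Proof.
move=> noholes x0X P_comp pP qP xp yq xX yX yP Ww Lw x_up.
have [lo [hi [P_seg segX lo_out hi_out]]] := portal_segment x0X P_comp.
have [pc pr] := (P_seg p).1 pP; have [qc qr] := (P_seg q).1 qP.
have [||lq [Wlq Llq _ lq_lvl]] := @axis_walk (inX X) q p; first by rewrite pc qc.
  by move=> z zc zr; apply: segX; flia.
rewrite pc in x_up; rewrite qc in lq_lvl.
have qX : q \in X by apply: segX.
exact: portal_shortcut noholes P_seg lo_out hi_out pP qP qX xp yq xX yX yP x_up Ww Lw
  Wlq Llq lq_lvl.
Qed.

End Frame.

Lemma portal_detour d (K : frame d) (X P : {fset vertex}) x0 x p q y w :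
  no_holes X -> x0 \in X ->
  (forall z, z \in P <-> connected_in (inX X) (adj_axis d) x0 z) ->
  p \in P -> q \in P -> adj x p -> adj y q ->
  x \in X -> x \notin P -> y \in X -> y \notin P ->
  walk (fun z => z \in X /\ z \notin P) adj x w -> last x w = y ->
  exists t, [/\ walk (inX X) adj x t, last x t = y &
    (size t <= (absz (pos K p - pos K q)%R).+1)%N].
Proof.
move=> noholes x0X P_comp pP qP xp yq xX xP yX yP Ww Lw.
have [x_up|[x_down|x_same]] : lvl K x = lvl K p + 1 \/
    lvl (frame_opp K) x = lvl (frame_opp K) p + 1 \/ lvl K x = lvl K p.
  by have := (adj_step K x p).1 xp; rewrite /step /=; flia.
- exact: portal_detour_up noholes x0X P_comp pP qP xp yq xX yX yP Ww Lw x_up.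
- have [t [Wt Lt St]] :=
    portal_detour_up noholes x0X P_comp pP qP xp yq xX yX yP Ww Lw x_down.
  by exists t; split=> //; move: St => /=; flia.
- suff : x \in P by rewrite (negbTE xP).
  have x0p := (P_comp p).1 pP; apply/P_comp; apply: (connected_trans x0p).
  exists [:: x]; split; first exact: connected_memr x0p.
  split=> //; split=> //; apply/(adj_axis_step K).
  by have := (adj_step K x p).1 xp; rewrite /step; flia.
Qed.

Lemma walk_connected_avoid (X P : {fset vertex}) a s :
  a \in X -> walk (inX X) adj a s -> ~~ has (mem P) (a :: s) ->
  connected_in (fun z => z \in X /\ z \notin P) adj a (last a s).
Proof.
move=> aX Ws /hasPn asP; exists s; split; first by split=> //; apply: asP; exact: mem_head.
split=> //; apply: walk_subset (Ws) => z zs.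
by split; [exact: walk_mem Ws z zs | apply: asP; rewrite in_cons zs orbT].
Qed.

Local Open Scope fset_scope.

Theorem mainTheorem4 (X P : {fset vertex}) (u v : vertex) (s : seq vertex) :
  GX_connected X -> no_holes X -> is_portal X P ->
  u \in X -> u \notin P -> v \in X -> v \notin P ->
  shortest_path X u s v ->
  ((exists w, w \in u :: s /\ w \in P) <->
   ~ connected_in (fun x => x \in X /\ x \notin P) adj u v).
Proof.
move=> _ noholes [d [x0 [x0X P_comp]]] uX uP vX vP sp.
have [[_ [Ws Ls]] _] := sp.
split=> [[w0 [w0s w0P]] uv | not_uv]; last first.
  have [/hasP [w ws wP]|noP] := boolP (has (mem P) (u :: s)); first by exists w.
  by case: not_uv; rewrite -Ls; exact: walk_connected_avoid.
have [||s1 [p [m [y [n [Es pP qP us1P yn]]]]]] := @split_entry_exit _ (mem P) u s uP;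
  [by rewrite Ls | by apply/hasP; exists w0 | subst s].
move: Ws; rewrite walk_cat /= walk_cat => -[Ws1 [xp [pX [Wm [qy [yX Wn]]]]]].
have ux := walk_connected_avoid uX Ws1 us1P.
have yv : connected_in (fun z => z \in X /\ z \notin P) adj y v.
  by rewrite -Ls last_cat /= last_cat; exact: walk_connected_avoid.
have [w [[xX xP] [Ww Lw]]] := connected_trans (connected_sym adj_sym ux)
  (connected_trans uv (connected_sym adj_sym yv)).
have [t [Wt Lt St]] := portal_detour (frame_of d) noholes x0X P_comp pP qP xp
  (adj_sym qy) xX xP yX (norP yn).1 Ww Lw.
have sp' : shortest_path X u (s1 ++ (p :: rcons m y) ++ n) v by rewrite cat_cons cat_rcons.
have := shortest_path_infix sp' Wt; rewrite Lt /= last_rcons size_rcons => /(_ erefl) mt.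
have := walk_pos_dist (frame_of d) Wm; rewrite -abszN opprB leqNgt => /negP; apply.
by rewrite -ltnS; exact: leq_trans mt St.
Qed.
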